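(* Let $X$ be a nonempty set and $f: X \to X$ a map. For $k \ge 1$ let $E^k = X - f^k(X)$, let $E = E^1$, and let $E^\infty = \bigcup_{k>0} E^k$. Suppose $E$ is finite and that there is no $K>0$ with $E^K = E^\infty$. Then there exists a point $e \in E$ such that the points $f^k(e)$, $k > 0$, all belong to $E^\infty$ and are pairwise distinct. Moreover, for any such $e$ there is a positive integer $M(e)$ such that for every $k \ge M(e)$ the equation $f(x) = f^k(e)$ has exactly one solution $x\in X$, namely $x = f^{k-1}(e)$.
   Context: $f^0=\mathrm{Id}$ and $f^{k+1} = f\circ f^k$. No topology or algebraic structure is assumed on $X$. *)

From Stdlib Require Import List.

Fixpoint fpow {X : Type} (f : X -> X) (k : nat) : X -> X :=
  match k with
  | O => fun x => x
  | S k' => fun x => f (fpow f k' x)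
  end.

Definition Ek {X : Type} (f : X -> X) (k : nat) (y : X) : Prop :=
  ~ (exists x : X, fpow f k x = y).

Definition Einf {X : Type} (f : X -> X) (y : X) : Prop :=
  exists k : nat, 0 < k /\ Ek f k y.

Definition finite_set {X : Type} (A : X -> Prop) : Prop :=
  exists l : list X, forall x, A x -> In x l.

From Stdlib Require Import List Arith Lia Classical.

(* Say that e escapes at depth n when f^n(e) is not in f^(n+1)(X); this is
   downward closed in n, and a point escaping at every depth lies in E, has
   its whole orbit in E^oo and has an injective orbit.  If E^(n+1) <> E^oo,
   a point of E^m \ E^(n+1) (m > n+1) is traced back along f to a point
   escaping at depth n; finiteness of E then yields a single point escaping
   at every depth.
   For the second part, every preimage x of f^k(e) lies in some E^m, hence
   on the orbit of a point e' of E.  Among the finitely many e' in E whose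
   orbit meets that of e, the meeting indices are bounded by some C; for
   k > C injectivity of the orbit of e forces x = f^(k-1)(e). *)

Lemma In_uniform_bound {A : Type} (P : A -> nat -> Prop) (l : list A) :
  (forall a m n, m <= n -> P a m -> P a n) ->
  (forall a, In a l -> exists n, P a n) ->
  exists n, forall a, In a l -> P a n.
Proof.
  intros Pmono. induction l as [|b l IH]; intros Hex.
  - exists 0. intros a [].
  - destruct IH as [n Hn]; [intros a Ha; apply Hex; right; exact Ha|].
    destruct (Hex b (or_introl eq_refl)) as [m Hm].
    exists (Nat.max m n). intros a [<-|Ha].
    + apply (Pmono _ m); [lia|exact Hm].
    + apply (Pmono _ n); [lia|exact (Hn a Ha)].
Qed.

Section Iterates.

Context {X : Type} (f : X -> X).

Lemma fpow_add a b x : fpow f (a + b) x = fpow f a (fpow f b x).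
Proof. induction a; simpl; congruence. Qed.

Lemma Ek_mono m n y : m <= n -> Ek f m y -> Ek f n y.
Proof.
  intros Hmn Hy [z Hz]. apply Hy. exists (fpow f (n - m) z).
  rewrite <- fpow_add, <- Hz. f_equal. lia.
Qed.

Lemma Ek_S_image m x : Ek f (S m) (f x) -> Ek f m x.
Proof. intros H [w Hw]. apply H. exists w. simpl. congruence. Qed.

Lemma Ek_in_orbit_of_E m y : Ek f m y -> exists j e, Ek f 1 e /\ fpow f j e = y.
Proof.
  revert y. induction m as [|m IH]; intros y Hy.
  - exfalso. apply Hy. exists y. reflexivity.
  - destruct (classic (Ek f 1 y)) as [Ey|Ey].
    + exists 0, y. auto.
    + apply NNPP in Ey. destruct Ey as [z <-].
      destruct (IH z (Ek_S_image m z Hy)) as [j [e [He Hj]]].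
      exists (S j), e. simpl. rewrite Hj. auto.
Qed.

Definition escapes (n : nat) (e : X) : Prop := Ek f (S n) (fpow f n e).

Lemma escapes_le i n e : i <= n -> escapes n e -> escapes i e.
Proof.
  unfold escapes. intros Hi He [z Hz]. apply He. exists z.
  assert (HS : fpow f (S n) z = fpow f (n - i) (fpow f (S i) z))
    by (rewrite <- fpow_add; f_equal; lia).
  assert (Hn : fpow f n e = fpow f (n - i) (fpow f i e))
    by (rewrite <- fpow_add; f_equal; lia).
  congruence.
Qed.

Lemma escapes_E n e : escapes n e -> Ek f 1 e.
Proof. exact (escapes_le 0 n e (le_0_n n)). Qed.

Lemma escapes_Einf n e : escapes n e -> Einf f (fpow f n e).
Proof. intros He. exists (S n). split; [lia|exact He]. Qed.

Lemma fpow_injective_of_escapes e :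
  (forall n, escapes n e) -> forall k l, fpow f k e = fpow f l e -> k = l.
Proof.
  intros He.
  assert (Hlt : forall k l, k < l -> fpow f k e <> fpow f l e).
  { intros k l Hkl Heq. apply (He k). exists (fpow f (l - S k) e).
    rewrite <- fpow_add, Heq. f_equal. lia. }
  intros k l Heq. destruct (Nat.lt_total k l) as [H|[H|H]]; auto; exfalso.
  - exact (Hlt k l H Heq).
  - exact (Hlt l k H (eq_sym Heq)).
Qed.

Lemma escapes_of_Ek_fpow t : forall n x,
  Ek f (n + t) (fpow f n x) -> exists e, escapes n e.
Proof.
  induction t as [|t IH]; intros n x Hx.
  - exfalso. apply Hx. exists x. rewrite Nat.add_0_r. reflexivity.
  - destruct (classic (escapes n x)) as [Esc|Esc]; [exists x; exact Esc|].
    apply NNPP in Esc. destruct Esc as [z Hz].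
    destruct (IH (S n) z) as [e He].
    + rewrite Hz. replace (S n + t) with (n + S t) by lia. exact Hx.
    + exists e. exact (escapes_le n (S n) e (Nat.le_succ_diag_r n) He).
Qed.

Lemma escapes_everywhere_of_unstable :
  ~ (exists K, 0 < K /\ forall y, Ek f K y <-> Einf f y) ->
  forall n, exists e, escapes n e.
Proof.
  intros Hunstable n. apply NNPP. intros Hnone. apply Hunstable.
  exists (S n). split; [lia|]. intros y. split.
  - intros Hy. exists (S n). split; [lia|exact Hy].
  - intros [m [_ Hy]]. apply NNPP. intros Hy'. apply NNPP in Hy'.
    destruct Hy' as [x <-]. apply Hnone.
    destruct (escapes_of_Ek_fpow m (S n) x) as [e He].
    + exact (Ek_mono m (S n + m) _ ltac:(lia) Hy).
    + exists e. exact (escapes_le n (S n) e (Nat.le_succ_diag_r n) He).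
Qed.

Lemma always_escaping_of_finite :
  finite_set (Ek f 1) -> (forall n, exists e, escapes n e) ->
  exists e, forall n, escapes n e.
Proof.
  intros [l Hl] Hesc. apply NNPP. intros Hnone.
  destruct (In_uniform_bound (fun e n => ~ escapes n e) l) as [K HK].
  - intros a m n Hmn Hm Hn. exact (Hm (escapes_le m n a Hmn Hn)).
  - intros e _. apply NNPP. intros Hall. apply Hnone. exists e.
    intros n. apply NNPP. intros Hn. apply Hall. exists n. exact Hn.
  - destruct (Hesc K) as [e He].
    exact (HK e (Hl e (escapes_E K e He)) He).
Qed.

Definition in_orbit (y x : X) : Prop := exists a, fpow f a x = y.

Lemma in_orbit_meeting_bound e :
  finite_set (Ek f 1) ->
  exists C, forall e', Ek f 1 e' ->
    (exists c, 0 < c /\ in_orbit (fpow f c e) e') ->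
    exists c, 0 < c <= C /\ in_orbit (fpow f c e) e'.
Proof.
  intros [l Hl].
  destruct (In_uniform_bound (fun e' C =>
      (exists c, 0 < c /\ in_orbit (fpow f c e) e') ->
      exists c, 0 < c <= C /\ in_orbit (fpow f c e) e') l) as [C HC].
  - intros e' m n Hmn Hm Hmeet. destruct (Hm Hmeet) as [c [Hc Ho]].
    exists c. split; [lia|exact Ho].
  - intros e' _.
    destruct (classic (exists c, 0 < c /\ in_orbit (fpow f c e) e'))
      as [[c [Hc Ho]]|Hno].
    + exists c. intros _. exists c. split; [lia|exact Ho].
    + exists 0. intros Hmeet. contradiction.
  - exists C. intros e' He'. exact (HC e' (Hl e' He')).
Qed.

Section InjectiveOrbit.

Variable e : X.
Hypothesis fpow_e_inj :
  forall k l, 0 < k -> 0 < l -> fpow f k e = fpow f l e -> k = l.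

Lemma fpow_pred_of_meeting e' a c j k :
  0 < c -> c < k ->
  fpow f a e' = fpow f c e -> fpow f (S j) e' = fpow f k e ->
  fpow f j e' = fpow f (k - 1) e.
Proof.
  intros Hc Hck Ha Hj. destruct (Nat.le_gt_cases a j) as [Haj|Hja].
  - assert (Hx : fpow f j e' = fpow f (j - a + c) e).
    { rewrite fpow_add, <- Ha, <- fpow_add. f_equal. lia. }
    assert (Hk : S (j - a + c) = k).
    { apply fpow_e_inj; [lia|lia|]. simpl. rewrite <- Hx. exact Hj. }
    rewrite Hx. f_equal. lia.
  - exfalso.
    assert (Hc' : c = a - S j + k).
    { apply fpow_e_inj; [lia|lia|].
      rewrite <- Ha, fpow_add, <- Hj, <- fpow_add. f_equal. lia. }
    lia.
Qed.

Lemma unique_preimage_late C :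
  (forall k, 0 < k -> Einf f (fpow f k e)) ->
  (forall e', Ek f 1 e' ->
     (exists c, 0 < c /\ in_orbit (fpow f c e) e') ->
     exists c, 0 < c <= C /\ in_orbit (fpow f c e) e') ->
  forall k, C < k -> forall x, f x = fpow f k e -> x = fpow f (k - 1) e.
Proof.
  intros Hinf HC k Hk x Hx.
  destruct (Hinf k ltac:(lia)) as [m [_ Hm]].
  assert (Ex : Ek f m x).
  { apply Ek_S_image. apply (Ek_mono m); [lia|]. rewrite Hx. exact Hm. }
  destruct (Ek_in_orbit_of_E m x Ex) as [j [e' [He' <-]]].
  destruct (HC e' He') as [c [Hc [a Ha]]].
  { exists k. split; [lia|]. exists (S j). exact Hx. }
  exact (fpow_pred_of_meeting e' a c j k ltac:(lia) ltac:(lia) Ha Hx).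
Qed.

End InjectiveOrbit.

End Iterates.

Theorem lemma1 (X : Type) (x0 : X) (f : X -> X) :
  finite_set (Ek f 1) ->
  ~ (exists K : nat, 0 < K /\ forall y : X, Ek f K y <-> Einf f y) ->
  (exists e : X, Ek f 1 e /\
     (forall k, 0 < k -> Einf f (fpow f k e)) /\
     (forall k l, 0 < k -> 0 < l -> fpow f k e = fpow f l e -> k = l))
  /\
  (forall e : X, Ek f 1 e ->
     (forall k, 0 < k -> Einf f (fpow f k e)) ->
     (forall k l, 0 < k -> 0 < l -> fpow f k e = fpow f l e -> k = l) ->
     exists M : nat, 0 < M /\
       forall k, M <= k -> forall x : X, f x = fpow f k e <-> x = fpow f (k - 1) e).
Proof.
  intros Hfin Hunstable. split.
  - destruct (always_escaping_of_finite f Hfin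
                (escapes_everywhere_of_unstable f Hunstable)) as [e He].
    exists e. split; [exact (escapes_E f 0 e (He 0))|split].
    + intros k _. exact (escapes_Einf f k e (He k)).
    + intros k l _ _. exact (fpow_injective_of_escapes f e He k l).
  - intros e _ Hinf Hinj.
    destruct (in_orbit_meeting_bound f e Hfin) as [C HC].
    exists (S C). split; [lia|]. intros k Hk x. split.
    + exact (unique_preimage_late f e Hinj C Hinf HC k ltac:(lia) x).
    + intros ->. destruct k as [|k]; [lia|]. simpl. rewrite Nat.sub_0_r. reflexivity.
Qed.
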